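(* Let $m\ge 1$ and $k\ge 1$ be integers with $\gcd(k,\tau(m))=1$. Then $\sigma(m)$ divides $\sigma_k(m)$. In particular, if $m$ is multiperfect (i.e. $m\mid\sigma(m)$), then $m\mid\sigma_k(m)$ for every $k\ge 1$ coprime to $\tau(m)$. Consequently, if $m$ is multiperfect and $\tau(m)$ is a power of $2$, then $m\mid\sigma_k(m)$ for every odd $k\ge 1$.
   Context: For integers $k\ge 0$ and $n\ge 1$, $\sigma_k(n)=\sum_{d\mid n} d^k$, and $\sigma=\sigma_1$. $\tau(n)=\sigma_0(n)$ is the number of positive divisors of $n$. *)

From mathcomp Require Import all_boot.
Set Implicit Arguments. Unset Strict Implicit. Unset Printing Implicit Defensive.

Definition sigmak (k n : nat) : nat := \sum_(d <- divisors n) d ^ k.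
Definition sigma (n : nat) : nat := sigmak 1 n.
Definition tau (n : nat) : nat := size (divisors n).

From mathcomp Require Import all_boot zify.
Set Implicit Arguments. Unset Strict Implicit. Unset Printing Implicit Defensive.

(* Both sigma_k and tau are multiplicative, so it suffices to
   treat a prime power p^a, where tau(p^a) = a + 1 = n and
     sigma(p^a)   = 1 + p + ... + p^(n-1)           =: G,
     sigma_k(p^a) = 1 + p^k + ... + p^(k(n-1)).
   Modulo G we have p^n = 1, hence p^(k i) = p^(k i mod n); when k is coprime
   to n the map i |-> k i mod n permutes {0, ..., n-1}, so sigma_k(p^a) is
   congruent to G, i.e. divisible by G.

   The two other parts of the theorem follow by
   transitivity of divisibility, using that odd k is coprime to 2^e. *)

Section GeometricSums.

Variables (x n : nat).
Hypothesis n_gt0 : 0 < n.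

Local Notation G := (\sum_(i < n) x ^ i).

(* x^n = 1 modulo 1 + x + ... + x^(n-1), since x^n - 1 = (x - 1) G. *)
Lemma expn_geom_mod : x ^ n = 1 %[mod G].
Proof.
case: x => [|y].
  have G1 : \sum_(i < n) 0 ^ i = 1.
    case: n n_gt0 => // n' _; rewrite big_ord_recl big1 ?addn0 // => i _.
    by rewrite exp0n.
  by rewrite G1 !modn1.
by rewrite -(prednK (expn_gt0 y.+1 n)) predn_exp -addn1 modnMDl.
Qed.

Lemma expn_geom_mod_exp j : x ^ j = x ^ (j %% n) %[mod G].
Proof.
rewrite {1}(divn_eq j n) expnD (mulnC (j %/ n)) expnM.
by rewrite -modnMml -modnXm expn_geom_mod modnXm exp1n modnMml mul1n.
Qed.

Variable k : nat.
Hypothesis k_coprime : coprime k n.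

Definition scale_ord (i : 'I_n) : 'I_n := Ordinal (ltn_pmod (k * i) n_gt0).

Lemma scale_ord_inj : injective scale_ord.
Proof.
suff le_inj (i j : 'I_n) : i <= j -> scale_ord i = scale_ord j -> i = j.
  by move=> i j; case: (leqP i j) => [|/ltnW] ? E; [|symmetry]; apply: le_inj.
move=> le_ij /(congr1 val) /= /eqP; rewrite eq_sym eqn_mod_dvd ?leq_mul //.
rewrite -mulnBr Gauss_dvdr; last by rewrite coprime_sym.
have lt_ji : j - i < n by rewrite (leq_ltn_trans (leq_subr _ _)).
case: (posnP (j - i)) => [ji0 _ | ji_gt0]; last by rewrite gtnNdvd.
by apply: val_inj; apply/eqP; rewrite eqn_leq le_ij -subn_eq0 ji0.
Qed.

Lemma geom_sum_dvd_pow : G %| \sum_(i < n) (x ^ k) ^ i.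
Proof.
apply/eqP; rewrite -modn_summ.
under eq_bigr => i _ do rewrite -expnM (expn_geom_mod_exp (k * i)).
rewrite modn_summ.
have -> : \sum_(i < n) x ^ ((k * i) %% n) = G.
  by rewrite [RHS](reindex_inj scale_ord_inj).
by rewrite modnn.
Qed.

End GeometricSums.

Lemma divisorsM a b : 0 < a -> 0 < b -> coprime a b ->
  perm_eq (divisors (a * b)) [seq d1 * d2 | d1 <- divisors a, d2 <- divisors b].
Proof.
move=> a_gt0 b_gt0 co_ab; have ab_gt0 : 0 < a * b by rewrite muln_gt0 a_gt0.
have gcd_a u v : u %| a -> v %| b -> gcdn a (u * v) = u.
  move=> ua vb; rewrite Gauss_gcdl; first exact/gcdn_idPr.
  exact: coprime_dvdr vb co_ab.
have gcd_b u v : u %| a -> v %| b -> gcdn b (u * v) = v.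
  move=> ua vb; rewrite mulnC Gauss_gcdl; first exact/gcdn_idPr.
  by rewrite coprime_sym; exact: coprime_dvdl ua co_ab.
apply: uniq_perm; first exact: divisors_uniq.
  apply: allpairs_uniq; try exact: divisors_uniq.
  move=> [d1 d2] [e1 e2] /allpairsP [[u1 v1] /= [u1a v1b [-> ->]]].
  move=> /allpairsP [[u2 v2] /= [u2a v2b [-> ->]]] /= E.
  rewrite -!dvdn_divisors // in u1a v1b u2a v2b.
  congr pair; first by rewrite -(gcd_a u1 v1) // E gcd_a.
  by rewrite -(gcd_b u1 v1) // E gcd_b.
move=> d; rewrite -dvdn_divisors //; apply/idP/allpairsP => [d_ab | ].
  exists (gcdn d a, gcdn d b); rewrite /= -!dvdn_divisors // !dvdn_gcdr.
  split=> //; apply/eqP; rewrite eqn_dvd; apply/andP; split.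
    have d_gb : d %| gcdn d a * b by rewrite muln_gcdl dvdn_gcd d_ab dvdn_mulr.
    by rewrite muln_gcdr dvdn_gcd d_gb dvdn_mull.
  rewrite Gauss_dvd ?dvdn_gcdl //.
  exact: coprime_dvdl (dvdn_gcdr _ _) (coprime_dvdr (dvdn_gcdr _ _) co_ab).
by case=> -[u v] [] /=; rewrite -!dvdn_divisors // => ua vb ->; exact: dvdn_mul.
Qed.

Lemma sigmakM k a b : 0 < a -> 0 < b -> coprime a b ->
  sigmak k (a * b) = sigmak k a * sigmak k b.
Proof.
move=> a_gt0 b_gt0 co_ab.
rewrite /sigmak (perm_big _ (divisorsM a_gt0 b_gt0 co_ab)).
rewrite -(map_allpairs (fun p : nat * nat => p.1 * p.2) (fun u v => (u, v))).
rewrite big_map big_allpairs big_distrl; apply: eq_bigr => u _.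
by rewrite big_distrr; apply: eq_bigr => v _; rewrite expnMn.
Qed.

Lemma tauM a b : 0 < a -> 0 < b -> coprime a b -> tau (a * b) = tau a * tau b.
Proof.
move=> a_gt0 b_gt0 co_ab.
by rewrite /tau (perm_size (divisorsM a_gt0 b_gt0 co_ab)) size_allpairs.
Qed.

Lemma divisors_pfactor p a : prime p ->
  perm_eq (divisors (p ^ a)) [seq p ^ i | i <- iota 0 a.+1].
Proof.
move=> p_pr; have pa_gt0 : 0 < p ^ a by rewrite expn_gt0 prime_gt0.
apply: uniq_perm; first exact: divisors_uniq.
  by rewrite map_inj_uniq ?iota_uniq //; apply: expnI; exact: prime_gt1.
move=> d; rewrite -dvdn_divisors //; apply/dvdn_pfactor/mapP => // -[i].
  by move=> le_ia ->; exists i; rewrite // mem_iota add0n ltnS.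
by rewrite mem_iota add0n ltnS => le_ia ->; exists i.
Qed.

Lemma sigmak_pfactor k p a : prime p ->
  sigmak k (p ^ a) = \sum_(i < a.+1) (p ^ k) ^ i.
Proof.
move=> p_pr; rewrite /sigmak (perm_big _ (divisors_pfactor a p_pr)) big_map.
rewrite -[iota 0 a.+1]/(index_iota 0 a.+1) big_mkord.
by apply: eq_bigr => i _; exact: expnAC.
Qed.

Lemma tau_pfactor p a : prime p -> tau (p ^ a) = a.+1.
Proof.
by move=> p_pr; rewrite /tau (perm_size (divisors_pfactor a p_pr)) size_map size_iota.
Qed.

Lemma sigma_dvd_sigmak m k : 0 < m -> coprime k (tau m) -> sigma m %| sigmak k m.
Proof.
elim/ltn_ind: m => m IH m_gt0 co_k.
have [m_le1 | m_gt1] := leqP m 1.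
  have -> : m = 1 by lia.
  by rewrite /sigma /sigmak (_ : divisors 1 = [:: 1]) // !big_seq1 exp1n.
set p := pdiv m; have p_pr : prime p by apply: pdiv_prime.
set r := m`_p^'; set a := logn p m.
have def_m : m = p ^ a * r by rewrite -p_part /r partnC.
have co_pr : coprime (p ^ a) r by rewrite -p_part coprime_partC.
have pa_gt0 : 0 < p ^ a by rewrite expn_gt0 prime_gt0.
have r_gt0 : 0 < r by apply: part_gt0.
have a_gt0 : 0 < a by rewrite /a lognE p_pr (ltnW m_gt1) pdiv_dvd.
move: co_k; rewrite def_m /sigma !sigmakM // tauM // tau_pfactor // coprimeMr.
case/andP=> co_ka co_kr; apply: dvdn_mul.
  by rewrite !sigmak_pfactor // expn1; exact: geom_sum_dvd_pow.
apply: IH => //; rewrite [X in _ < X]def_m ltn_Pmull //.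
by rewrite -(expn0 p) ltn_exp2l ?prime_gt1.
Qed.

Lemma multiperfect_dvd_sigmak m k : 0 < m -> m %| sigma m ->
  coprime k (tau m) -> m %| sigmak k m.
Proof.
by move=> m_gt0 m_dvd co_k; exact: dvdn_trans m_dvd (sigma_dvd_sigmak m_gt0 co_k).
Qed.

Theorem mainTheorem5 :
  (forall m k : nat, 1 <= m -> 1 <= k -> coprime k (tau m) ->
     sigma m %| sigmak k m)
  /\ (forall m k : nat, 1 <= m -> 1 <= k -> m %| sigma m ->
        coprime k (tau m) -> m %| sigmak k m)
  /\ (forall m : nat, 1 <= m -> m %| sigma m ->
        (exists e : nat, tau m = 2 ^ e) ->
        forall k : nat, 1 <= k -> odd k -> m %| sigmak k m).
Proof.
split; first by move=> m k m_gt0 _; exact: sigma_dvd_sigmak.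
split; first by move=> m k m_gt0 _; exact: multiperfect_dvd_sigmak.
move=> m m_gt0 m_dvd [e tau_m] k _ odd_k.
by apply: multiperfect_dvd_sigmak; rewrite // tau_m coprimeXr // coprimen2.
Qed.
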